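(* Let $1\le p<\infty$. There exist a bilateral weighted backward shift $B$ on $\ell^p(\mathbb{Z})$ (i.e. $Be_n=\alpha_ne_{n-1}$ for a bounded complex sequence $(\alpha_n)_{n\in\mathbb{Z}}$) and a compact operator $K$ on $\ell^p(\mathbb{Z})$ such that $B+K$ is not hypercyclic, but $B+K$ has an orbit admitting a nonzero limit point (i.e. there are $u\in\ell^p(\mathbb{Z})$, $v\ne0$ and a strictly increasing $(n_k)$ with $(B+K)^{n_k}u\to v$ in norm).
   Context: $\{e_n\}_{n\in\mathbb{Z}}$ denotes the standard basis of $\ell^p(\mathbb{Z})$. An operator $T$ is hypercyclic if some orbit $\{T^ku:k\ge0\}$ is dense. *)

From Stdlib Require Import Reals ZArith.
From Coquelicot Require Import Coquelicot.
Open Scope R_scope.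

(* a^p for a >= 0, with the convention 0^p = 0 (p > 0). *)
Definition rpow (a p : R) : R := if Rle_dec a 0 then 0 else Rpower a p.

Definition seqZ := Z -> C.

(* symmetric partial sums  sum_{|n| <= N} |x_n|^p *)
Definition psum (p : R) (x : seqZ) (N : nat) : R :=
  sum_f_R0 (fun k => rpow (Cmod (x (Z.of_nat k - Z.of_nat N)%Z)) p) (2 * N).

Definition in_lp (p : R) (x : seqZ) : Prop :=
  exists M : R, forall N : nat, psum p x N <= M.

(* the l^p norm  (sum_n |x_n|^p)^(1/p)  (meaningful for x in l^p) *)
Definition lp_norm (p : R) (x : seqZ) : R :=
  rpow (real (Lim_seq (psum p x))) (/ p).

Definition sub_seq (x y : seqZ) : seqZ := fun n => Cminus (x n) (y n).

(* operators act on sequences; only their action on l^p matters *)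
Definition op := seqZ -> seqZ.

Definition op_add (S T : op) : op := fun x n => Cplus (S x n) (T x n).

Definition bounded_op (p : R) (T : op) : Prop :=
  (forall x, in_lp p x -> in_lp p (T x)) /\
  (forall (x y : seqZ) (a : C), in_lp p x -> in_lp p y ->
     forall n, T (fun m => Cplus (x m) (Cmult a (y m))) n
               = Cplus (T x n) (Cmult a (T y n))) /\
  (exists M : R, forall x, in_lp p x -> lp_norm p (T x) <= M * lp_norm p x).

(* compact operator: bounded linear, and the image of the unit ball is
   relatively compact (sequential form, l^p being a metric space) *)
Definition compact_op (p : R) (K : op) : Prop :=
  bounded_op p K /\
  forall xs : nat -> seqZ,
    (forall k, in_lp p (xs k) /\ lp_norm p (xs k) <= 1) ->
    exists (phi : nat -> nat) (y : seqZ),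
      (forall k, (phi k < phi (S k))%nat) /\ in_lp p y /\
      is_lim_seq (fun k => lp_norm p (sub_seq (K (xs (phi k))) y)) 0.

(* bilateral weighted backward shift: B e_n = alpha_n e_(n-1),
   i.e. (B x)_m = alpha_(m+1) x_(m+1) *)
Definition wshift (alpha : Z -> C) : op :=
  fun x m => Cmult (alpha (m + 1)%Z) (x (m + 1)%Z).

Definition hypercyclic (p : R) (T : op) : Prop :=
  exists u, in_lp p u /\
    forall v, in_lp p v -> forall eps : R, 0 < eps ->
      exists k : nat, lp_norm p (sub_seq (Nat.iter k T u) v) < eps.

From Stdlib Require Import Reals ZArith Lia Lra ClassicalEpsilon FunctionalExtensionality.
From Coquelicot Require Import Coquelicot.
Open Scope R_scope.

(** Take for [B] the unweighted backward shift and for [K] the rank-one operator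
    [K x = (x_0 - x_1) (e_0 - e_(-1))].  Then [((B + K) x)_0 = x_1 + (x_0 - x_1) = x_0]:
    the coordinate of index 0 is constant along every orbit, so no orbit can approach
    [(u_0 + 1) e_0] and [B + K] is not hypercyclic.  On the other hand
    [(B + K) e_0 = e_(-1) + (e_0 - e_(-1)) = e_0], so the orbit of [e_0] is constant
    and has the nonzero limit point [e_0]. *)

Lemma rpow_ge0 a p : 0 <= rpow a p.
Proof. unfold rpow; destruct Rle_dec; [lra | left; apply exp_pos]. Qed.

Lemma rpow_0 p : rpow 0 p = 0.
Proof. unfold rpow; destruct Rle_dec; lra. Qed.

Lemma rpow_le a b p : 0 < p -> a <= b -> rpow a p <= rpow b p.
Proof.
  intros hp hab. unfold rpow.
  destruct (Rle_dec a 0); destruct (Rle_dec b 0); try lra.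
  - left; apply exp_pos.
  - apply Rle_Rpower_l; lra.
Qed.

Lemma rpow_mult a b p : 0 <= a -> 0 <= b -> rpow (a * b) p = rpow a p * rpow b p.
Proof.
  intros ha hb.
  destruct (Req_dec a 0) as [->|ha']; [rewrite Rmult_0_l, rpow_0; ring|].
  destruct (Req_dec b 0) as [->|hb']; [rewrite Rmult_0_r, rpow_0; ring|].
  assert (0 < a * b) by (apply Rmult_lt_0_compat; lra).
  unfold rpow; do 3 (destruct Rle_dec; try lra).
  symmetry; apply Rpower_mult_distr; lra.
Qed.

Lemma rpow_rpow_inv c p : 0 < p -> 0 <= c -> rpow (rpow c p) (/ p) = c.
Proof.
  intros hp hc. destruct (Req_dec c 0) as [->|hc']; [rewrite !rpow_0; reflexivity|].
  assert (0 < rpow c p) by (unfold rpow; destruct Rle_dec; [lra | apply exp_pos]).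
  unfold rpow at 1; destruct Rle_dec; [lra|].
  unfold rpow; destruct Rle_dec; [lra|].
  rewrite Rpower_mult, Rinv_r by lra. apply Rpower_1; lra.
Qed.

Lemma rpow_plus_le a b p : 0 < p -> 0 <= a -> 0 <= b ->
  rpow (a + b) p <= rpow 2 p * (rpow a p + rpow b p).
Proof.
  intros hp ha hb.
  assert (hmax : rpow (Rmax a b) p <= rpow a p + rpow b p).
  { pose proof (rpow_ge0 a p); pose proof (rpow_ge0 b p).
    apply (Rmax_case a b (fun m => rpow m p <= _)); lra. }
  pose proof (Rmax_l a b); pose proof (Rmax_r a b).
  apply Rle_trans with (rpow (2 * Rmax a b) p).
  - apply rpow_le; lra.
  - rewrite rpow_mult by lra.
    apply Rmult_le_compat_l; [apply rpow_ge0 | exact hmax].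
Qed.

Lemma sum_f_R0_ge_term (f : nat -> R) n k :
  (forall i, 0 <= f i) -> (k <= n)%nat -> f k <= sum_f_R0 f n.
Proof.
  intros hf. induction n as [|n IH]; intros hk.
  - replace k with 0%nat by lia. simpl; lra.
  - simpl. pose proof (hf (S n)). destruct (Nat.eq_dec k (S n)) as [->|].
    + pose proof (cond_pos_sum f n hf). lra.
    + pose proof (IH ltac:(lia)). lra.
Qed.

Lemma sum_f_R0_single (f : nat -> R) k0 : (forall k, k <> k0 -> f k = 0) ->
  forall n, sum_f_R0 f n = if Nat.leb k0 n then f k0 else 0.
Proof.
  intros hf. induction n as [|n IH]; simpl.
  - destruct (Nat.leb_spec k0 0); [replace k0 with 0%nat by lia; reflexivity | apply hf; lia].
  - rewrite IH. destruct (Nat.leb_spec k0 n); destruct (Nat.leb_spec k0 (S n)); try lia.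
    + rewrite (hf (S n)) by lia. ring.
    + replace k0 with (S n) by lia. ring.
    + rewrite (hf (S n)) by lia. ring.
Qed.

Lemma psum_ge0 p x N : 0 <= psum p x N.
Proof. apply cond_pos_sum; intros; apply rpow_ge0. Qed.

Lemma psum_scal p a x N :
  psum p (fun n => (a * x n)%C) N = rpow (Cmod a) p * psum p x N.
Proof.
  unfold psum. rewrite scal_sum. apply sum_eq; intros i _.
  rewrite Cmod_mult, rpow_mult by apply Cmod_ge_0. ring.
Qed.

Lemma psum_dom p x y z N : 0 < p ->
  (forall n, Cmod (y n) <= Cmod (x n) + Cmod (z n)) ->
  psum p y N <= rpow 2 p * (psum p x N + psum p z N).
Proof.
  intros hp h. unfold psum. rewrite <- plus_sum, scal_sum.
  apply sum_Rle; intros i _. set (n := (Z.of_nat i - Z.of_nat N)%Z).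
  apply Rle_trans with (rpow (Cmod (x n) + Cmod (z n)) p).
  - apply rpow_le; auto.
  - rewrite Rmult_comm. apply rpow_plus_le; auto; apply Cmod_ge_0.
Qed.

Lemma psum_shift_le p x N : psum p (fun n => x (n + 1)%Z) N <= psum p x (S N).
Proof.
  unfold psum. replace (2 * S N)%nat with (S (S (2 * N))) by lia.
  rewrite (decomp_sum _ (S (S (2 * N)))), (decomp_sum _ (S (2 * N))) by lia.
  rewrite !Nat.pred_succ.
  set (t := fun k => rpow (Cmod (x (Z.of_nat k - Z.of_nat (S N))%Z)) p).
  assert (E : forall k, t (S (S k)) = rpow (Cmod (x (Z.of_nat k - Z.of_nat N + 1)%Z)) p).
  { intros k. unfold t. do 3 f_equal. lia. }
  rewrite (sum_eq _ _ _ (fun k _ => E k)).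
  pose proof (rpow_ge0 (Cmod (x (Z.of_nat 0 - Z.of_nat (S N))%Z)) p).
  pose proof (rpow_ge0 (Cmod (x (Z.of_nat 1 - Z.of_nat (S N))%Z)) p).
  unfold t. lra.
Qed.

Lemma psum_coord_le p x n N : (Z.abs_nat n <= N)%nat ->
  rpow (Cmod (x n)) p <= psum p x N.
Proof.
  intros hN. unfold psum.
  replace n with (Z.of_nat (Z.to_nat (n + Z.of_nat N)) - Z.of_nat N)%Z at 1 by lia.
  apply (sum_f_R0_ge_term (fun k => rpow (Cmod (x (Z.of_nat k - Z.of_nat N)%Z)) p)).
  - intros; apply rpow_ge0.
  - lia.
Qed.

Definition single (j : Z) (a : C) : seqZ := fun n => if Z.eq_dec n j then a else 0%C.

Lemma psum_single_le p j a N : 0 < p -> psum p (single j a) N <= rpow (Cmod a) p.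
Proof.
  intros hp. unfold psum.
  rewrite (sum_f_R0_single _ (Z.to_nat (j + Z.of_nat N))).
  - destruct Nat.leb; [|apply rpow_ge0]. apply rpow_le; auto.
    unfold single; destruct Z.eq_dec; [lra|]. rewrite Cmod_0. apply Cmod_ge_0.
  - intros k hk. unfold single. destruct Z.eq_dec; [lia|]. rewrite Cmod_0; apply rpow_0.
Qed.

Lemma in_lp_single p j a : 0 < p -> in_lp p (single j a).
Proof. intros hp. exists (rpow (Cmod a) p). intros; apply psum_single_le; auto. Qed.

Lemma in_lp_dom p x y z : 0 < p -> in_lp p x -> in_lp p z ->
  (forall n, Cmod (y n) <= Cmod (x n) + Cmod (z n)) -> in_lp p y.
Proof.
  intros hp [M1 h1] [M2 h2] h. exists (rpow 2 p * (M1 + M2)). intros N.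
  eapply Rle_trans; [apply psum_dom; eauto|].
  apply Rmult_le_compat_l; [apply rpow_ge0|]. specialize (h1 N); specialize (h2 N); lra.
Qed.

Lemma in_lp_le p x y : 0 < p -> in_lp p x ->
  (forall n, Cmod (y n) <= Cmod (x n)) -> in_lp p y.
Proof.
  intros hp hx h. apply (in_lp_dom p x y x hp hx hx).
  intros n. pose proof (h n); pose proof (Cmod_ge_0 (x n)). lra.
Qed.

Lemma in_lp_add p x y : 0 < p -> in_lp p x -> in_lp p y ->
  in_lp p (fun n => (x n + y n)%C).
Proof. intros hp hx hy. apply (in_lp_dom p x _ y hp hx hy); intros n; apply Cmod_triangle. Qed.

Lemma in_lp_sub p x y : 0 < p -> in_lp p x -> in_lp p y -> in_lp p (sub_seq x y).
Proof.
  intros hp hx hy. apply (in_lp_dom p x _ y hp hx hy). intros n. unfold sub_seq, Cminus.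
  rewrite <- (Cmod_opp (y n)). apply Cmod_triangle.
Qed.

Lemma in_lp_scal p a x : in_lp p x -> in_lp p (fun n => (a * x n)%C).
Proof.
  intros [M h]. exists (rpow (Cmod a) p * M). intros N. rewrite psum_scal.
  apply Rmult_le_compat_l; [apply rpow_ge0 | apply h].
Qed.

Lemma in_lp_shift p x : in_lp p x -> in_lp p (fun n => x (n + 1)%Z).
Proof. intros [M h]. exists M. intros N. eapply Rle_trans; [apply psum_shift_le | apply h]. Qed.

Lemma in_lp_Lim_psum p x : in_lp p x ->
  exists l, Lim_seq (psum p x) = Finite l /\ 0 <= l.
Proof.
  intros [M h].
  assert (hM : Rbar_le (Lim_seq (psum p x)) (Lim_seq (fun _ => M))).
  { apply Lim_seq_le_loc. exists 0%nat. auto. }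
  assert (h0 : Rbar_le (Lim_seq (fun _ => 0)) (Lim_seq (psum p x))).
  { apply Lim_seq_le_loc. exists 0%nat. intros; apply psum_ge0. }
  rewrite Lim_seq_const in hM, h0.
  destruct (Lim_seq (psum p x)) as [l| |]; simpl in *; try contradiction.
  exists l; auto.
Qed.

Lemma lp_norm_ge0 p x : 0 <= lp_norm p x.
Proof. apply rpow_ge0. Qed.

Lemma Cmod_le_lp_norm p x n : 0 < p -> in_lp p x -> Cmod (x n) <= lp_norm p x.
Proof.
  intros hp hx. destruct (in_lp_Lim_psum p x hx) as [l [E hl]].
  assert (h : Rbar_le (Lim_seq (fun _ => rpow (Cmod (x n)) p)) (Lim_seq (psum p x))).
  { apply Lim_seq_le_loc. exists (Z.abs_nat n). intros N hN. apply psum_coord_le; auto. }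
  rewrite Lim_seq_const, E in h. simpl in h.
  unfold lp_norm. rewrite E. simpl.
  rewrite <- (rpow_rpow_inv (Cmod (x n)) p hp (Cmod_ge_0 _)).
  apply rpow_le; auto. apply Rinv_0_lt_compat; auto.
Qed.

Lemma lp_norm_scal p a x : 0 < p -> in_lp p x ->
  lp_norm p (fun n => (a * x n)%C) = Cmod a * lp_norm p x.
Proof.
  intros hp hx. destruct (in_lp_Lim_psum p x hx) as [l [E hl]].
  unfold lp_norm. rewrite (Lim_seq_ext _ _ (psum_scal p a x)), Lim_seq_scal_l, E. simpl.
  rewrite rpow_mult, rpow_rpow_inv; auto using rpow_ge0, Cmod_ge_0.
Qed.

Lemma lp_norm_sub_self p x : 0 < p -> in_lp p x -> lp_norm p (sub_seq x x) = 0.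
Proof.
  intros hp hx.
  replace (sub_seq x x) with (fun n => (0 * x n)%C)
    by (apply functional_extensionality; intros n; unfold sub_seq; ring).
  rewrite lp_norm_scal, Cmod_0 by auto. ring.
Qed.

Lemma strict_incr_lt (phi : nat -> nat) : (forall k, (phi k < phi (S k))%nat) ->
  forall m n, (m < n)%nat -> (phi m < phi n)%nat.
Proof.
  intros h m n hmn. induction hmn as [|n _ IH]; [apply h|]. specialize (h n). lia.
Qed.

Lemma ValAdh_subseq (u : nat -> R) l : ValAdh u l ->
  exists phi : nat -> nat, (forall k, (phi k < phi (S k))%nat) /\
    is_lim_seq (fun k => u (phi k)) l.
Proof.
  intros hl.
  assert (G : forall k N : nat, {q : nat | (N <= q)%nat /\ Rabs (u q - l) < / (INR k + 1)}).
  { intros k N. apply constructive_indefinite_description.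
    assert (heps : 0 < / (INR k + 1)) by (apply Rinv_0_lt_compat; pose proof (pos_INR k); lra).
    destruct (hl (disc l (mkposreal _ heps)) N) as [q hq].
    - exists (mkposreal _ heps). intros y hy; exact hy.
    - exists q. exact hq. }
  pose (phi := fix phi (k : nat) : nat :=
                 match k with
                 | O => proj1_sig (G O O)
                 | S k' => proj1_sig (G k (S (phi k')))
                 end).
  assert (hclose : forall k, Rabs (u (phi k) - l) < / (INR k + 1)).
  { intros [|k]; [exact (proj2 (proj2_sig (G O O))) | exact (proj2 (proj2_sig (G (S k) _)))]. }
  exists phi. split.
  - intros k. exact (proj1 (proj2_sig (G (S k) (S (phi k))))).
  - apply is_lim_seq_spec. intros eps.
    destruct (archimed_cor1 eps (cond_pos eps)) as [N [hN hN0]].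
    exists N. intros n hn. eapply Rlt_trans; [apply hclose|].
    eapply Rle_lt_trans; [|apply hN]. apply Rinv_le_contravar.
    + apply lt_0_INR; auto.
    + apply le_INR in hn. lra.
Qed.

Lemma bounded_subseq_cv (u : nat -> R) B : (forall n, Rabs (u n) <= B) ->
  exists (phi : nat -> nat) (l : R), (forall k, (phi k < phi (S k))%nat) /\
    is_lim_seq (fun k => u (phi k)) l.
Proof.
  intros hu.
  assert (hin : forall n, -B <= u n <= B) by (intros n; apply Rabs_le_between, hu).
  destruct (Bolzano_Weierstrass u _ (compact_P3 (-B) B) hin) as [l hl].
  destruct (ValAdh_subseq u l hl) as [phi hphi]. exists phi, l. exact hphi.
Qed.

Lemma Cmod_le_Rabs_parts (z : C) : Cmod z <= Rabs (fst z) + Rabs (snd z).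
Proof.
  destruct z as [a b]. unfold Cmod; simpl.
  pose proof (Rabs_pos a); pose proof (Rabs_pos b).
  rewrite <- (sqrt_pow2 (Rabs a + Rabs b)) by lra. apply sqrt_le_1_alt.
  pose proof (Rsqr_abs a); pose proof (Rsqr_abs b). unfold Rsqr in *. nra.
Qed.

Lemma is_lim_seq_Rabs_sub (u : nat -> R) (l : R) :
  is_lim_seq u l -> is_lim_seq (fun n => Rabs (u n - l)) 0.
Proof.
  intros h. rewrite <- Rabs_R0, <- (Rminus_diag l).
  apply (is_lim_seq_abs _ (l - l)), is_lim_seq_minus'; [exact h | apply is_lim_seq_const].
Qed.

Lemma bounded_subseq_cv_C (a : nat -> C) B : (forall n, Cmod (a n) <= B) ->
  exists (phi : nat -> nat) (c : C), (forall k, (phi k < phi (S k))%nat) /\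
    is_lim_seq (fun k => Cmod (a (phi k) - c)%C) 0.
Proof.
  intros ha.
  assert (hparts : forall n, Rabs (fst (a n)) <= B /\ Rabs (snd (a n)) <= B).
  { intros n. pose proof (Rmax_Cmod (a n)). pose proof (ha n).
    pose proof (Rmax_l (Rabs (fst (a n))) (Rabs (snd (a n)))).
    pose proof (Rmax_r (Rabs (fst (a n))) (Rabs (snd (a n)))). lra. }
  destruct (bounded_subseq_cv (fun n => fst (a n)) B (fun n => proj1 (hparts n)))
    as [phi1 [l1 [hphi1 hl1]]].
  destruct (bounded_subseq_cv (fun k => snd (a (phi1 k))) B (fun k => proj2 (hparts (phi1 k))))
    as [phi2 [l2 [hphi2 hl2]]].
  exists (fun k => phi1 (phi2 k)), (l1, l2). split.
  - intros k. apply strict_incr_lt; auto.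
  - assert (hl1' : is_lim_seq (fun k => fst (a (phi1 (phi2 k)))) l1).
    { apply (is_lim_seq_subseq (fun n => fst (a (phi1 n))) l1 phi2); auto.
      apply eventually_subseq; auto. }
    apply is_lim_seq_le_le with (u := fun _ => 0)
      (w := fun k => Rabs (fst (a (phi1 (phi2 k))) - l1) + Rabs (snd (a (phi1 (phi2 k))) - l2)).
    + intros k. split; [apply Cmod_ge_0 | apply Cmod_le_Rabs_parts].
    + apply is_lim_seq_const.
    + replace (Finite 0) with (Finite (0 + 0)) by (f_equal; ring).
      apply is_lim_seq_plus'; apply is_lim_seq_Rabs_sub; auto.
Qed.

Definition rank_one (f : seqZ -> C) (w : seqZ) : op := fun x n => (f x * w n)%C.

Lemma rank_one_compact p (f : seqZ -> C) w M : 0 < p -> in_lp p w ->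
  (forall x y a, in_lp p x -> in_lp p y ->
     f (fun m => x m + a * y m)%C = (f x + a * f y)%C) ->
  (forall x, in_lp p x -> Cmod (f x) <= M * lp_norm p x) ->
  compact_op p (rank_one f w).
Proof.
  intros hp hw hlin hbound. unfold rank_one. split; [split; [|split]|].
  - intros x _. apply in_lp_scal, hw.
  - intros x y a hx hy n. rewrite hlin by auto. ring.
  - exists (M * lp_norm p w). intros x hx. rewrite lp_norm_scal by auto.
    pose proof (lp_norm_ge0 p w).
    replace (M * lp_norm p w * lp_norm p x) with (M * lp_norm p x * lp_norm p w) by ring.
    apply Rmult_le_compat_r; auto.
  - intros xs hxs.
    destruct (bounded_subseq_cv_C (fun k => f (xs k)) (Rabs M)) as [phi [c [hphi hc]]].
    { intros k. destruct (hxs k) as [hx hx1]. pose proof (hbound _ hx).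
      pose proof (lp_norm_ge0 p (xs k)). pose proof (Rle_abs M). pose proof (Rabs_pos M). nra. }
    exists phi, (fun n => (c * w n)%C). split; [exact hphi | split; [apply in_lp_scal, hw|]].
    apply is_lim_seq_ext with (u := fun k => Cmod (f (xs (phi k)) - c)%C * lp_norm p w).
    + intros k. rewrite <- lp_norm_scal by auto. f_equal.
      apply functional_extensionality; intros n. unfold sub_seq. ring.
    + replace (Finite 0) with (Rbar_mult 0 (lp_norm p w)) by (simpl; f_equal; ring).
      apply is_lim_seq_scal_r, hc.
Qed.

Lemma wshift_in_lp p alpha M x : 0 < p -> (forall n, Cmod (alpha n) <= M) ->
  in_lp p x -> in_lp p (wshift alpha x).
Proof.
  intros hp hM hx. apply (in_lp_le p (fun n => (RtoC M * x (n + 1)%Z)%C)); auto.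
  - apply in_lp_scal, in_lp_shift, hx.
  - intros n. unfold wshift. rewrite !Cmod_mult, Cmod_R.
    apply Rmult_le_compat_r; [apply Cmod_ge_0|]. eapply Rle_trans; [apply hM | apply Rle_abs].
Qed.

Lemma not_hypercyclic_of_coord_invariant p T j : 0 < p ->
  (forall x, in_lp p x -> in_lp p (T x)) -> (forall x, T x j = x j) ->
  ~ hypercyclic p T.
Proof.
  intros hp hT hj [u [hu hdense]].
  assert (hiter : forall k, in_lp p (Nat.iter k T u) /\ Nat.iter k T u j = u j).
  { induction k as [|k [IH1 IH2]]; simpl; auto. rewrite hj. auto. }
  set (v := single j (u j + 1)%C).
  assert (hv : in_lp p v) by apply in_lp_single, hp.
  destruct (hdense v hv 1 ltac:(lra)) as [k hk].
  destruct (hiter k) as [hk_lp hk_j].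
  pose proof (Cmod_le_lp_norm p _ j hp (in_lp_sub p _ _ hp hk_lp hv)) as hcoord.
  assert (h1 : Cmod (sub_seq (Nat.iter k T u) v j) = 1).
  { unfold sub_seq, v, single. rewrite hk_j. destruct Z.eq_dec; [|congruence].
    replace (u j - (u j + 1))%C with (Copp 1) by ring. rewrite Cmod_opp. apply Cmod_1. }
  lra.
Qed.

Lemma fixed_point_orbit_cv p T u : 0 < p -> in_lp p u -> T u = u ->
  is_lim_seq (fun k => lp_norm p (sub_seq (Nat.iter k T u) u)) 0.
Proof.
  intros hp hu hfix.
  apply is_lim_seq_ext with (u := fun _ => 0); [|apply is_lim_seq_const].
  intros k. replace (Nat.iter k T u) with u.
  - symmetry. apply lp_norm_sub_self; auto.
  - induction k as [|k IH]; simpl; congruence.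
Qed.

Definition unit_weights : Z -> C := fun _ => 1%C.

Definition Kdiff : op :=
  rank_one (fun x => (x 0%Z - x 1%Z)%C) (sub_seq (single 0 1) (single (-1) 1)).

Lemma Kdiff_compact p : 0 < p -> compact_op p Kdiff.
Proof.
  intros hp. apply rank_one_compact with (M := 2); auto.
  - apply in_lp_sub; auto using in_lp_single.
  - intros x y a _ _. ring.
  - intros x hx. eapply Rle_trans; [apply (Cmod_triangle (x 0%Z) (- x 1%Z)) |].
    rewrite Cmod_opp.
    pose proof (Cmod_le_lp_norm p x 0 hp hx). pose proof (Cmod_le_lp_norm p x 1 hp hx). lra.
Qed.

Lemma shift_plus_Kdiff_coord0 x : op_add (wshift unit_weights) Kdiff x 0%Z = x 0%Z.
Proof. unfold op_add, wshift, unit_weights, Kdiff, rank_one, sub_seq, single. simpl. ring. Qed.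

Lemma shift_plus_Kdiff_fixes_e0 :
  op_add (wshift unit_weights) Kdiff (single 0 1) = single 0 1.
Proof.
  apply functional_extensionality; intros m.
  unfold op_add, wshift, unit_weights, Kdiff, rank_one, sub_seq, single.
  destruct (Z.eq_dec m 0) as [->|h0]; simpl; [ring|].
  destruct (Z.eq_dec m (-1)) as [->|h1]; simpl; [ring|].
  destruct (Z.eq_dec (m + 1) 0); [lia | ring].
Qed.

Theorem corollary4p17 (p : R) (hp : 1 <= p) :
  exists (alpha : Z -> C) (K : op),
    (exists M : R, forall n, Cmod (alpha n) <= M) /\
    (forall n, alpha n <> 0%C) /\
    compact_op p K /\
    ~ hypercyclic p (op_add (wshift alpha) K) /\
    exists (u v : seqZ) (nk : nat -> nat),
      in_lp p u /\ in_lp p v /\ (exists n, v n <> 0%C) /\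
      (forall k, (nk k < nk (S k))%nat) /\
      is_lim_seq
        (fun k => lp_norm p (sub_seq (Nat.iter (nk k) (op_add (wshift alpha) K) u) v)) 0.
Proof.
  assert (hp0 : 0 < p) by lra.
  assert (hweights : forall n, Cmod (unit_weights n) <= 1)
    by (intros; unfold unit_weights; rewrite Cmod_1; lra).
  pose proof (Kdiff_compact p hp0) as hK.
  exists unit_weights, Kdiff. split; [|split; [|split; [|split]]].
  - exists 1. exact hweights.
  - intros n. apply C1_nz.
  - exact hK.
  - apply not_hypercyclic_of_coord_invariant with (j := 0%Z); auto using shift_plus_Kdiff_coord0.
    intros x hx. apply in_lp_add; auto.
    + apply wshift_in_lp with (M := 1); auto.
    + apply hK, hx.
  - exists (single 0 1), (single 0 1), (fun k => k).
    repeat split; auto using in_lp_single.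
    + exists 0%Z. unfold single. simpl. apply C1_nz.
    + apply fixed_point_orbit_cv; auto using in_lp_single, shift_plus_Kdiff_fixes_e0.
Qed.
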